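(* Let $\rho$ be an $i$-polymatroid on a finite set $E$ and let $\rho^*$ be its $i$-dual. If $M_1,\dots,M_i$ are matroids on $E$ with $\rho=r_{M_1}+\cdots+r_{M_i}$, then $\rho^*=r_{M_1^*}+\cdots+r_{M_i^*}$. More generally, if $k\ge i$ and $M_1,\dots,M_k$ are matroids on $E$ with $\rho=r_{M_1}+\cdots+r_{M_k}$, then there are matroids $M'_1,\dots,M'_k$ on $E$ with $\rho^*=r_{M'_1}+\cdots+r_{M'_k}$ such that, for every $s\in[k]$, the matroid obtained from $M'_s$ by deleting its loops and coloops is the dual of the matroid obtained from $M_s$ by deleting its loops and coloops. Consequently, if $\min(\chi(\rho),\chi(\rho^* ))\ge i$, then $\chi(\rho)=\chi(\rho^* )$.
   Context: A polymatroid on $E$ is a function $\rho:2^E\to\mathbb{Z}$ that is normalized, non-decreasing and submodular; it is an $i$-polymatroid if $\rho(\{e\})\le i$ for all $e\in E$. The $i$-dual of an $i$-polymatroid $\rho$ is $\rho^*(X)=i|X|-\rho(E)+\rho(E-X)$ for $X\subseteq E$. $M^*$ denotes the dual matroid. The chromatic number $\chi(\rho)$ is the least positive integer $k$ such that $\rho=r_{M_1}+\cdots+r_{M_k}$ for some matroids $M_1,\dots,M_k$ on $E$, and $\infty$ if there is no such $k$. *)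

From mathcomp Require Import all_boot all_order all_algebra.
Set Implicit Arguments. Unset Strict Implicit. Unset Printing Implicit Defensive.
Import Order.TTheory GRing.Theory Num.Theory.
Local Open Scope ring_scope.

Section Poly.
Variable E : finType.

Definition polymatroid (rho : {set E} -> int) : Prop :=
  [/\ rho set0 = 0,
      (forall X Y : {set E}, X \subset Y -> rho X <= rho Y) &
      (forall X Y : {set E}, rho (X :|: Y) + rho (X :&: Y) <= rho X + rho Y)].

Definition ipolymatroid (i : nat) (rho : {set E} -> int) : Prop :=
  polymatroid rho /\ (forall e : E, rho [set e] <= i%:Z).

Definition idual (i : nat) (rho : {set E} -> int) (X : {set E}) : int :=
  (i * #|X|)%:Z - rho setT + rho (~: X).

Record matroid := Matroid { mrank : {set E} -> int ; mrank_ax : ipolymatroid 1 mrank }.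

Definition dual_rank (M : matroid) : {set E} -> int := idual 1 (mrank M).

Definition loops (M : matroid) : {set E} := [set e | mrank M [set e] == 0].
Definition coloops (M : matroid) : {set E} :=
  [set e | mrank M (~: [set e]) < mrank M setT].

(* ground set of M \ (loops ∪ coloops) *)
Definition core (M : matroid) : {set E} := ~: (loops M :|: coloops M).

(* the matroid M' \ (loops ∪ coloops) is the dual of M \ (loops ∪ coloops):
   same ground set G, and r_{M'}(X) = |X| - r_M(G) + r_M(G - X) for X ⊆ G *)
Definition core_dual (M' M : matroid) : Prop :=
  core M' = core M /\
  forall X : {set E}, X \subset core M ->
    mrank M' X = #|X|%:Z - mrank M (core M) + mrank M (core M :\: X).

Definition colorable (rho : {set E} -> int) (k : nat) : Prop :=
  exists M : 'I_k -> matroid, forall X : {set E}, rho X = \sum_(s < k) mrank (M s) X.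

(* is_chi rho c : the chromatic number of rho is c (None = infinity) *)
Definition is_chi (rho : {set E} -> int) (c : option nat) : Prop :=
  match c with
  | Some k => (0 < k)%N /\ colorable rho k /\
              (forall k', (0 < k')%N -> colorable rho k' -> (k <= k')%N)
  | None => forall k', (0 < k')%N -> ~ colorable rho k'
  end.

Definition le_ext (i : nat) (c : option nat) : Prop :=
  match c with Some k => (i <= k)%N | None => True end.

End Poly.

(* Every matroid M splits E into its loops, its coloops K and its core C, and
   r(E) - r(E - X) = r(C) - r(C - X) + |X ∩ K|.  Summing over a decomposition
   rho = r_1 + ... + r_k gives
     rho^*(X) = sum_s (|X ∩ C_s| - r_s(C_s) + r_s(C_s - X))
                + (i|X| - sum_s |X ∩ (C_s ∪ K_s)|),
   where the first sum is that of the duals of the cores.  An element e lies in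
   C_s ∪ K_s exactly when it is not a loop of M_s, i.e. for rho({e}) <= i indices s;
   the missing i - rho({e}) units are supplied by declaring e a coloop of M'_s for
   that many indices s at which e is a loop of M_s, which is possible because there
   are k - rho({e}) >= i - rho({e}) of them.  For k = i this is plain linearity of
   the dual.  Since rho -> rho^* is an involution on i-polymatroids that preserves
   k-colourability for k >= i, the chromatic numbers agree once both are >= i. *)

From mathcomp Require Import all_boot all_order all_algebra.
From mathcomp Require Import zify.
Set Implicit Arguments. Unset Strict Implicit. Unset Printing Implicit Defensive.
Import Order.TTheory GRing.Theory Num.Theory.
Local Open Scope ring_scope.

Section Polymatroid.
Variables (E : finType) (r : {set E} -> int).
Hypothesis r_poly : polymatroid r.
Implicit Types (X Y Z S : {set E}).

Lemma polymatroid0 : r set0 = 0.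
Proof. by case: r_poly. Qed.

Lemma polymatroid_mono X Y : X \subset Y -> r X <= r Y.
Proof. by case: r_poly => _ + _; apply. Qed.

Lemma polymatroid_submod X Y : r (X :|: Y) + r (X :&: Y) <= r X + r Y.
Proof. by case: r_poly. Qed.

Lemma polymatroid_ge0 X : 0 <= r X.
Proof. by rewrite -polymatroid0 polymatroid_mono ?sub0set. Qed.

Lemma polymatroid_setU1_le a X : r (a |: X) <= r X + r [set a].
Proof.
have := polymatroid_submod X [set a]; have := polymatroid_ge0 (X :&: [set a]).
by rewrite setUC; lia.
Qed.

Lemma polymatroid_setU_le Z S : r (Z :|: S) <= r Z + \sum_(e in S) r [set e].
Proof.
suff seq_le s : r (Z :|: [set:: s]) <= r Z + \sum_(e <- s) r [set e].
  by have := seq_le (enum S); rewrite set_enum big_enum.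
elim: s => [|a s IH]; first by rewrite big_nil addr0 set_nil setU0.
rewrite set_cons big_cons setUCA.
by apply: le_trans (polymatroid_setU1_le _ _) _; rewrite addrCA [leLHS]addrC lerD2l.
Qed.

End Polymatroid.

Lemma card_set1I (E : finType) (e : E) (A : {set E}) : #|[set e] :&: A| = (e \in A : nat).
Proof.
case: (boolP (e \in A)) => eA; first by rewrite (setIidPl _) ?cards1 ?sub1set.
by rewrite disjoint_setI0 ?cards0 // disjoints1.
Qed.

Section Matroid.
Variables (E : finType) (M : matroid E).
Local Notation r := (mrank M).
Local Notation C := (core M).
Local Notation K := (coloops M).
Implicit Types (X Y Z S : {set E}).

Lemma mrank_polymatroid : polymatroid r.
Proof. by case: (mrank_ax M). Qed.

Lemma mrank0 : r set0 = 0.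
Proof. exact: polymatroid0 mrank_polymatroid. Qed.

Lemma mrank_mono X Y : X \subset Y -> r X <= r Y.
Proof. exact: (polymatroid_mono mrank_polymatroid). Qed.

Lemma mrank_submod X Y : r (X :|: Y) + r (X :&: Y) <= r X + r Y.
Proof. exact: (polymatroid_submod mrank_polymatroid). Qed.

Lemma mrank_ge0 X : 0 <= r X.
Proof. exact: (polymatroid_ge0 mrank_polymatroid). Qed.

Lemma mrank_set1 e : r [set e] = (e \notin loops M)%:Z.
Proof.
case: (mrank_ax M) => _ /(_ e); have := mrank_ge0 [set e].
by rewrite inE; case: eqP => /=; lia.
Qed.

Lemma mrank_setU_le_card Z S : r (Z :|: S) <= r Z + #|S|%:Z.
Proof.
apply: le_trans (polymatroid_setU_le mrank_polymatroid Z S) _.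
rewrite lerD2l -sum1_card -natz natr_sum ler_sum // => e _.
by rewrite mrank_set1; case: (e \in loops M).
Qed.

Lemma mrank_setU_loops Z S : S \subset loops M -> r (Z :|: S) = r Z.
Proof.
move=> S_loops; apply/eqP; rewrite eq_le (mrank_mono (subsetUl Z S)) andbT.
apply: le_trans (polymatroid_setU_le mrank_polymatroid Z S) _.
rewrite big1 ?addr0 // => e /(subsetP S_loops) e_loop.
by rewrite mrank_set1 e_loop.
Qed.

Lemma loops_disjoint_coloops : [disjoint loops M & K].
Proof.
rewrite disjoints_subset; apply/subsetP => e; rewrite !inE => /eqP e_loop.
have := mrank_submod [set e] (~: [set e]).
by rewrite setUCr setICr mrank0 e_loop -leNgt; lia.
Qed.

Lemma mem_core e : (e \in C) = (e \notin loops M) && (e \notin K).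
Proof. by rewrite /core in_setC in_setU negb_or. Qed.

Lemma mem_core_add_coloops e : ((e \in C) + (e \in K))%N = (e \notin loops M : nat).
Proof.
have := disjointFr loops_disjoint_coloops (x := e); rewrite mem_core.
by case: (e \in loops M) => [-> //|]; case: (e \in K).
Qed.

Lemma mrank_setU1_coloop Y e : e \in K -> e \notin Y -> r (e |: Y) = r Y + 1.
Proof.
rewrite inE => e_coloop eNY.
have := mrank_submod (e |: Y) (~: [set e]).
rewrite -setUA setUCA setUCr setUT setIUl setICr set0U -setDE.
rewrite (setDidPl (_ : [disjoint Y & [set e]])); last by rewrite disjoint_sym disjoints1.
have := polymatroid_setU1_le mrank_polymatroid e Y.
by rewrite mrank_set1; case: (e \in loops M) => /=; lia.
Qed.

Lemma mrank_setU_coloops Y S :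
  S \subset K -> [disjoint S & Y] -> r (Y :|: S) = r Y + #|S|%:Z.
Proof.
suff seq_eq s : uniq s -> {subset s <= K} -> [disjoint s & Y] ->
    r (Y :|: [set:: s]) = r Y + (size s)%:Z.
  move=> /subsetP S_K S_Y; rewrite cardE -[in LHS](set_enum S).
  apply: seq_eq; first exact: enum_uniq.
    by move=> e; rewrite mem_enum; apply: S_K.
  by rewrite (eq_disjoint (mem_enum _)).
elim: s => [|a s IH] /=; first by rewrite set_nil setU0 addr0.
case/andP=> aNs s_uniq s_K; rewrite disjoint_cons => /andP [aNY s_Y].
rewrite set_cons setUCA mrank_setU1_coloop ?s_K ?mem_head //.
  rewrite IH // => [|e es]; first by rewrite -addrA -PoszD addn1.
  by rewrite s_K // inE es orbT.
by rewrite in_setU negb_or aNY inE.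
Qed.

Lemma mrank_core_split Y : r Y = r (Y :&: C) + #|Y :&: K|%:Z.
Proof.
have Y_eq : Y = (Y :&: C :|: Y :&: K) :|: Y :&: loops M.
  by apply/setP => x; rewrite !in_setU !in_setI mem_core;
     case: (x \in Y); case: (x \in loops M); case: (x \in K).
rewrite {1}Y_eq mrank_setU_loops ?subsetIr // mrank_setU_coloops ?subsetIr //.
rewrite -setI_eq0; apply/eqP/setP => x; rewrite !in_setI mem_core in_set0.
by case: (x \in K); rewrite !andbF.
Qed.

Lemma mrank_setT_sub_setC X :
  r setT - r (~: X) = r C - r (C :\: X) + #|X :&: K|%:Z.
Proof.
rewrite (mrank_core_split setT) (mrank_core_split (~: X)) !setTI.
rewrite setIC -setDE [~: X :&: K]setIC -setDE -(cardsID X K) [K :&: X]setIC.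
lia.
Qed.

Lemma mrank_core_setD1 e : e \in C -> r (C :\ e) = r C.
Proof.
rewrite mem_core => /andP [_ eNK].
have := mrank_setT_sub_setC [set e]; rewrite card_set1I (negbTE eNK).
have := mrank_mono (subsetDl C [set e]).
by move: eNK; rewrite inE -leNgt; lia.
Qed.

End Matroid.

Lemma cardsUI_setI (E : finType) (X Y Z : {set E}) :
  (#|(X :|: Y) :&: Z| + #|(X :&: Y) :&: Z| = #|X :&: Z| + #|Y :&: Z|)%N.
Proof. by rewrite setIUl -[RHS]cardsUI setIACA setIid. Qed.

Section DualCore.
Variables (E : finType) (M : matroid E) (A : {set E}).
Local Notation r := (mrank M).
Local Notation C := (core M).
Implicit Types (X Y : {set E}).

(* The dual of the core of [M], extended by the elements of [A] as coloops and by
   the other non-core elements as loops. *)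
Definition dual_core_rank X : int :=
  #|X :&: C|%:Z - r C + r (C :\: X) + #|X :&: A|%:Z.

Lemma dual_core_rank_polymatroid : polymatroid dual_core_rank.
Proof.
rewrite /dual_core_rank; split.
- by rewrite !set0I setD0 cards0; lia.
- move=> X Y sXY.
  have X_C : (Y :&: C) :&: X = X :&: C.
    by rewrite setIAC (setIidPr sXY).
  have CX_eq : C :\: X = (C :\: Y) :|: ((Y :&: C) :\: X).
    apply/setP => x; rewrite !(in_setD, in_setU, in_setI); have := subsetP sXY x.
    by case: (x \in X); case: (x \in Y); case: (x \in C) => // ->.
  have := mrank_setU_le_card M (C :\: Y) ((Y :&: C) :\: X).
  have := cardsID X (Y :&: C); rewrite X_C -CX_eq.
  have := subset_leq_card (setSI A sXY).
  lia.
- move=> X Y; rewrite setDUr setDIr.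
  have := cardsUI_setI X Y C; have := cardsUI_setI X Y A.
  have := mrank_submod M (C :\: X) (C :\: Y).
  lia.
Qed.

Lemma dual_core_rank_set1 e :
  dual_core_rank [set e] = ((e \in C) + (e \in A))%N%:Z.
Proof.
rewrite /dual_core_rank !card_set1I PoszD.
case: (boolP (e \in C)) => eC; first by rewrite mrank_core_setD1 //; lia.
rewrite (setDidPl (_ : [disjoint C & [set e]])); last by rewrite disjoint_sym disjoints1.
lia.
Qed.

Lemma dual_core_rank_setC1 e :
  dual_core_rank (~: [set e]) = dual_core_rank setT - (e \in A)%:Z.
Proof.
rewrite /dual_core_rank !setTI setDT setDE setCK.
rewrite mrank0 [~: [set e] :&: C]setIC [~: [set e] :&: A]setIC -!setDE.
rewrite (cardsD1 e C) (cardsD1 e A) !PoszD setIC.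
case: (boolP (e \in C)) => eC.
  rewrite (setIidPl _) ?sub1set // mrank_set1.
  by move: eC; rewrite mem_core => /andP [-> _]; lia.
rewrite disjoint_setI0 ?mrank0 ?disjoints1 //.
lia.
Qed.

Hypothesis A_core : [disjoint A & C].

Lemma dual_core_rank_set1_le1 e : dual_core_rank [set e] <= 1.
Proof.
rewrite dual_core_rank_set1.
by case: (boolP (e \in A)) => [/(disjointFr A_core) -> | _]; case: (e \in C).
Qed.

Definition dual_core_matroid : matroid E :=
  Matroid (conj dual_core_rank_polymatroid dual_core_rank_set1_le1).

Lemma mem_loops_dual_core_matroid e :
  (e \in loops dual_core_matroid) = (e \notin C) && (e \notin A).
Proof.
by rewrite [LHS]inE /= dual_core_rank_set1; case: (e \in C); case: (e \in A).
Qed.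

Lemma mem_coloops_dual_core_matroid e : (e \in coloops dual_core_matroid) = (e \in A).
Proof.
by rewrite [LHS]inE /= dual_core_rank_setC1 ltrBlDr ltrDl ltz_nat lt0b.
Qed.

Lemma core_dual_core_matroid : core dual_core_matroid = C.
Proof.
apply/setP => e.
rewrite mem_core mem_loops_dual_core_matroid mem_coloops_dual_core_matroid.
by case: (boolP (e \in A)) => [/(disjointFr A_core) -> | _]; case: (e \in C).
Qed.

Lemma core_dual_dual_core_matroid : core_dual dual_core_matroid M.
Proof.
split => [|X X_C /=]; first exact: core_dual_core_matroid.
rewrite /dual_core_rank (setIidPl X_C) disjoint_setI0 ?cards0 ?addr0 //.
by apply: disjointWl X_C _; rewrite disjoint_sym.
Qed.

End DualCore.

Lemma sum_prefix_ge (P : nat -> bool) m n :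
  (\sum_(s < n) (P s && (m <= \sum_(t < s) P t)) = \sum_(t < n) P t - m)%N.
Proof.
elim: n => [|n IH]; first by rewrite !big_ord0.
by rewrite !big_ord_recr /= IH; case: (P n); case: leqP => /=; lia.
Qed.

Lemma card_setI_sum (E : finType) (X S : {set E}) :
  #|X :&: S| = (\sum_(e in X) (e \in S))%N.
Proof.
rewrite -sum1_card big_mkcond [RHS]big_mkcond; apply: eq_bigr => e _.
by rewrite in_setI; case: (e \in X); case: (e \in S).
Qed.

Section DualDecomposition.
Variables (E : finType) (i k : nat) (M : 'I_k -> matroid E).

(* [is_loop_at e] extends [fun s => e \in loops (M s)] by [false] beyond [k], so
   that it can be summed over the prefixes [t < s]. *)
Definition is_loop_at (e : E) (t : nat) : bool :=
  oapp (fun s => e \in loops (M s)) false (insub t).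

(* Every [e] is a non-loop of at most [i] of the [M s], hence a loop of at least
   [k - i] of them; keeping its first [k - i] loop occurrences as loops and turning
   the later ones into coloops makes [e] count exactly [i] times in total. *)
Definition surplus_loops (s : 'I_k) : {set E} :=
  [set e in loops (M s) | (k - i <= \sum_(t < s) is_loop_at e t)%N].

Lemma is_loop_atE e (s : 'I_k) : is_loop_at e s = (e \in loops (M s)).
Proof. by rewrite /is_loop_at valK. Qed.

Lemma surplus_loops_disjoint_core s : [disjoint surplus_loops s & core (M s)].
Proof.
rewrite disjoints_subset; apply/subsetP => e /setIdP [e_loop _].
by rewrite /core setCK in_setU e_loop.
Qed.

Hypothesis i_le_k : (i <= k)%N.
Hypothesis nonloops_le : forall e, (\sum_(s < k) (e \notin loops (M s)) <= i)%N.

Lemma sum_mem_core_coloops_surplus e :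
  (\sum_(s < k) ((e \in core (M s)) + (e \in coloops (M s)) + (e \in surplus_loops s)) = i)%N.
Proof.
rewrite big_split /=.
under eq_bigr => s _ do rewrite mem_core_add_coloops -is_loop_atE.
under [X in (_ + X)%N]eq_bigr => s _ do rewrite inE -is_loop_atE.
rewrite sum_prefix_ge.
have nonloops_e : (\sum_(s < k) ~~ is_loop_at e s <= i)%N.
  by under eq_bigr => s _ do rewrite is_loop_atE; exact: nonloops_le.
have nonloops_add_loops :
    (\sum_(s < k) ~~ is_loop_at e s + \sum_(s < k) is_loop_at e s = k)%N.
  rewrite -big_split /= (eq_bigr (fun=> 1%N)) => [|s _]; last by rewrite addn_negb.
  by rewrite sum1_card card_ord.
move: nonloops_e nonloops_add_loops.
move: (\sum_(s < k) ~~ is_loop_at e s)%N (\sum_(s < k) is_loop_at e s)%N => nonloops nloops.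
lia.
Qed.

Lemma sum_card_core_coloops_surplus X :
  (\sum_(s < k) (#|X :&: core (M s)| + #|X :&: coloops (M s)| + #|X :&: surplus_loops s|)
    = i * #|X|)%N.
Proof.
under eq_bigr => s _ do rewrite !card_setI_sum -!big_split.
rewrite exchange_big /= (eq_bigr (fun=> i)) => [|e _]; last exact: sum_mem_core_coloops_surplus.
by rewrite sum_nat_const mulnC.
Qed.

End DualDecomposition.

Lemma idual_sum_dual_core (E : finType) (i k : nat) (M : 'I_k -> matroid E)
    (rho : {set E} -> int) :
  (i <= k)%N -> (forall e, rho [set e] <= i%:Z) ->
  (forall X, rho X = \sum_(s < k) mrank (M s) X) ->
  exists M' : 'I_k -> matroid E,
    (forall X, idual i rho X = \sum_(s < k) mrank (M' s) X) /\
    (forall s, core_dual (M' s) (M s)).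
Proof.
move=> i_le_k rho_set1 rho_sum.
have nonloops_le e : (\sum_(s < k) (e \notin loops (M s)) <= i)%N.
  have := rho_set1 e; rewrite rho_sum.
  by under eq_bigr do rewrite mrank_set1; rewrite -(big_morph _ PoszD (erefl 0%:Z)).
exists (fun s => dual_core_matroid (surplus_loops_disjoint_core i M s)).
split => [X|s]; last exact: core_dual_dual_core_matroid.
rewrite /idual !rho_sum /=.
have rankE s : dual_core_rank (M s) (surplus_loops i M s) X =
    (#|X :&: core (M s)| + #|X :&: coloops (M s)| + #|X :&: surplus_loops i M s|)%N%:Z
    - (mrank (M s) setT - mrank (M s) (~: X)).
  by rewrite mrank_setT_sub_setC /dual_core_rank !PoszD; lia.
rewrite (eq_bigr _ (fun s _ => rankE s)) sumrB -(big_morph _ PoszD (erefl 0%:Z)).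
by rewrite sum_card_core_coloops_surplus // sumrB opprB addrA addrAC.
Qed.

Lemma idual_sum_dual_rank (E : finType) (n : nat) (M : 'I_n -> matroid E)
    (rho : {set E} -> int) :
  (forall X, rho X = \sum_(s < n) mrank (M s) X) ->
  forall X, idual n rho X = \sum_(s < n) dual_rank (M s) X.
Proof.
move=> rho_sum X; rewrite /dual_rank /idual !rho_sum big_split sumrB /=.
by rewrite sumr_const card_ord mul1n -mulr_natr natz -PoszM mulnC.
Qed.

Section IDual.
Variables (E : finType) (i : nat) (rho : {set E} -> int).
Hypothesis rho_poly : polymatroid rho.

Lemma idual_set1_le e : idual i rho [set e] <= i%:Z.
Proof.
rewrite /idual cards1 muln1.
by have := polymatroid_mono rho_poly (subsetT (~: [set e])); lia.
Qed.

Lemma idualK X : idual i (idual i rho) X = rho X.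
Proof.
rewrite /idual setCK setCT (polymatroid0 rho_poly) cardsT -(cardsC X) mulnDr PoszD.
lia.
Qed.

End IDual.

Lemma eq_colorable (E : finType) (f g : {set E} -> int) k :
  f =1 g -> colorable f k -> colorable g k.
Proof. by move=> fg [M f_sum]; exists M => X; rewrite -fg. Qed.

Lemma colorable_idual (E : finType) (i k : nat) (rho : {set E} -> int) :
  (forall e, rho [set e] <= i%:Z) -> (i <= k)%N ->
  colorable rho k -> colorable (idual i rho) k.
Proof.
move=> rho_set1 i_le_k [M rho_sum].
by have [M' [idual_sum _]] := idual_sum_dual_core i_le_k rho_set1 rho_sum; exists M'.
Qed.

Lemma is_chi_transfer (E : finType) (i : nat) (f g : {set E} -> int) (c c' : option nat) :
  (forall k, (i <= k)%N -> colorable f k -> colorable g k) ->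
  (forall k, (i <= k)%N -> colorable g k -> colorable f k) ->
  is_chi f c -> is_chi g c' -> le_ext i c -> le_ext i c' -> c = c'.
Proof.
move=> fg gf; case: c => [a|]; case: c' => [b|] //=.
- move=> [a_gt0 [f_a f_min]] [b_gt0 [g_b g_min]] i_le_a i_le_b.
  have a_le_b := f_min b b_gt0 (gf b i_le_b g_b).
  have b_le_a := g_min a a_gt0 (fg a i_le_a f_a).
  by congr Some; apply/eqP; rewrite eqn_leq a_le_b b_le_a.
- by move=> [a_gt0 [f_a _]] g_none i_le_a _; case: (g_none a a_gt0 (fg a i_le_a f_a)).
- by move=> f_none [b_gt0 [g_b _]] _ i_le_b; case: (f_none b b_gt0 (gf b i_le_b g_b)).
Qed.

Theorem theorem4p1 (E : finType) (i : nat) (rho : {set E} -> int)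
  (hrho : ipolymatroid i rho) :
  (forall M : 'I_i -> matroid E,
     (forall X : {set E}, rho X = \sum_(s < i) mrank (M s) X) ->
     forall X : {set E}, idual i rho X = \sum_(s < i) dual_rank (M s) X)
  /\
  (forall (k : nat), (i <= k)%N ->
   forall M : 'I_k -> matroid E,
     (forall X : {set E}, rho X = \sum_(s < k) mrank (M s) X) ->
     exists M' : 'I_k -> matroid E,
       (forall X : {set E}, idual i rho X = \sum_(s < k) mrank (M' s) X) /\
       (forall s : 'I_k, core_dual (M' s) (M s)))
  /\
  (forall c c' : option nat,
     is_chi rho c -> is_chi (idual i rho) c' ->
     le_ext i c -> le_ext i c' -> c = c').
Proof.
case: hrho => rho_poly rho_set1.
split; first by move=> M; exact: idual_sum_dual_rank.
split; first by move=> k i_le_k M; exact: idual_sum_dual_core.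
move=> c c'; apply: is_chi_transfer => k i_le_k; first exact: colorable_idual.
move/(colorable_idual (idual_set1_le i rho_poly) i_le_k).
exact/eq_colorable/idualK.
Qed.
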